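(* Let $n\ge6$ be even and let $\varrho:G_n\to\mathcal L$ be a homomorphism. Then $\mathrm{Area}_n(p,q;\varrho)$ does not depend on the choice of $p,q\in\overline{\mathrm B}W$.
   Context: Let $W$ be a 2-dimensional complex vector space with a hermitian form $\langle\cdot,\cdot\rangle$ of signature $(+,-)$. In $\mathbb{CP}W$ let $\mathrm BW$ be the negative points (the Poincaré disc, curvature $-1$, oriented by its complex structure), $\mathrm SW$ the isotropic points, $\overline{\mathrm B}W=\mathrm BW\cup\mathrm SW$; $\mathcal L=\mathrm{PU}(W)$ is the group of orientation-preserving isometries of $\mathrm BW$. Oriented triangle area: $\mathrm{Area}\,\Delta(p_1,p_2,p_3)=2\arg(-\langle p_1,p_2\rangle\langle p_2,p_3\rangle\langle p_3,p_1\rangle)$ ($\arg\in[-\pi,\pi]$) if no two vertices are equal isotropic points, $0$ otherwise. $\mathrm{Area}(p_1,\dots,p_m):=\sum_{k=1}^m\mathrm{Area}\,\Delta(c,p_k,p_{k+1})$ (indices mod $m$), independent of $c\in\overline{\mathrm B}W$. $H_n$ is the group generated by $r_1,\dots,r_n$ with relations $r_i^2=1$, $r_n\cdots r_1=1$, indices mod $n$; for even $n$, $G_n\le H_n$ is the index-2 subgroup of words of even length in the $r_i$. Put $v_i:=r_i\cdots r_2r_1$ for $0\le i\le n-1$ ($v_0=1$); for $0\le i\le n-2$ put $w_i:=v_i$ if $i$ is even and $w_i:=v_ir_n$ if $i$ is odd, and $w_{i+n-1}:=r_nw_ir_n$; indices of the $w_i$ are mod $2n-2$; all $w_i\in G_n$.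 Write $w_ix$ for $\varrho(w_i)x$. Define $\mathrm{Area}_n(p,q;\varrho):=\mathrm{Area}(w_0p,w_1q,w_2p,w_3q,\dots,w_{2n-4}p,w_{2n-3}q)$ (the $2n-2$ points $w_jx_j$, with $x_j=p$ for even $j$ and $x_j=q$ for odd $j$). *)

From Stdlib Require Import Reals List Arith Relations ClassicalDescription.
From Coquelicot Require Import Coquelicot.
Import ListNotations.
Open Scope R_scope.

(** Principal argument of a complex number, with values in (-PI, PI];
    arg 0 = 0 (only used on non-zero numbers). *)
Definition arg (z : C) : R :=
  let x := Re z in let y := Im z in
  match Rlt_dec 0 x with
  | left _ => atan (y / x)
  | right _ =>
    match Rlt_dec x 0 with
    | left _ => match Rle_dec 0 y with
                | left _ => atan (y / x) + PI
                | right _ => atan (y / x) - PI end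
    | right _ =>
      match Rlt_dec 0 y with
      | left _ => PI / 2
      | right _ => match Rlt_dec y 0 with
                   | left _ => - (PI / 2)
                   | right _ => 0 end end
    end
  end.

(** Vectors of W = C^2 and 2x2 complex matrices ((a,b),(c,d)) = [[a,b],[c,d]]. *)
Definition vec := (C * C)%type.
Definition mat := (C * C * C * C)%type.

Definition mat_app (A : mat) (z : vec) : vec :=
  let '(a, b, c, d) := A in (a * fst z + b * snd z, c * fst z + d * snd z)%C.

Definition mat_mul (A B : mat) : mat :=
  let '(a, b, c, d) := A in let '(a', b', c', d') := B in
  (a * a' + b * c', a * b' + b * d', c * a' + d * c', c * b' + d * d')%C.

Definition mat_scale (l : C) (A : mat) : mat :=
  let '(a, b, c, d) := A in (l * a, l * b, l * c, l * d)%C.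

Definition mat_one : mat := (RtoC 1, RtoC 0, RtoC 0, RtoC 1).

(** Projective equality of matrices: equal up to a non-zero scalar
    (equality in PU(W) for matrices in U(W)). *)
Definition proj_eq (A B : mat) : Prop :=
  exists l : C, l <> RtoC 0 /\ A = mat_scale l B.

(** A hermitian form on C^2 given by the hermitian matrix
    Hm = [[ha, hb], [conj hb, hd]] (ha hd real):
    <z, w> = w^* Hm z  (linear in z, antilinear in w). *)
Record hform := HForm { ha : R; hb : C; hd : R }.

Definition herm (H : hform) (z w : vec) : C :=
  (Cconj (fst w) * (RtoC (ha H) * fst z + hb H * snd z)
   + Cconj (snd w) * (Cconj (hb H) * fst z + RtoC (hd H) * snd z))%C.

(** signature (+,-) for a 2x2 hermitian matrix  <=>  negative determinant *)
Definition signature_pm (H : hform) : Prop :=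
  ha H * hd H - (Cmod (hb H))² < 0.

Definition is_unitary (H : hform) (A : mat) : Prop :=
  forall z w, herm H (mat_app A z) (mat_app A w) = herm H z w.

(** Points of closed B W, represented by (non-zero) vectors. *)
Definition in_closed_ball (H : hform) (v : vec) : Prop :=
  v <> (RtoC 0, RtoC 0) /\ Re (herm H v v) <= 0.

Definition isotropic (H : hform) (v : vec) : Prop := herm H v v = RtoC 0.

(** equal as points of CP W (proportional non-zero vectors) *)
Definition proj_same (u v : vec) : Prop :=
  (fst u * snd v - snd u * fst v)%C = RtoC 0.

Definition equal_isotropic (H : hform) (u v : vec) : Prop :=
  isotropic H u /\ isotropic H v /\ proj_same u v.

Definition Pdec (P : Prop) : {P} + {~ P} :=
  ClassicalDescription.excluded_middle_informative P.

Definition area_tri (H : hform) (p1 p2 p3 : vec) : R :=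
  if Pdec (equal_isotropic H p1 p2 \/ equal_isotropic H p2 p3
           \/ equal_isotropic H p3 p1)
  then 0
  else 2 * arg (- (herm H p1 p2 * herm H p2 p3 * herm H p3 p1))%C.

(** Area(p_1,...,p_m) computed with the auxiliary point c:
    sum_k Area Delta(c, p_k, p_{k+1}), indices mod m. *)
Fixpoint area_chain (H : hform) (c first : vec) (l : list vec) : R :=
  match l with
  | [] => 0
  | [y] => area_tri H c y first
  | y :: ((z :: _) as t) => area_tri H c y z + area_chain H c first t
  end.

Definition area_poly (H : hform) (c : vec) (l : list vec) : R :=
  match l with
  | [] => 0
  | x :: _ => area_chain H c x l
  end.

(** Words in the generators r_1..r_n: a word [a1; ...; ak] stands for
    r_{a1} r_{a2} ... r_{ak}. *)
Definition word := list nat.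
Definition valid_word (n : nat) (w : word) : Prop :=
  List.Forall (fun i => (1 <= i <= n)%nat) w.

(** One elementary move for the presentation of H_n:
    deleting r_i r_i, or deleting r_n ... r_1. *)
Inductive Hn_step (n : nat) : word -> word -> Prop :=
  | Hn_sq : forall u v i, (1 <= i <= n)%nat -> Hn_step n (u ++ i :: i :: v) (u ++ v)
  | Hn_rel : forall u v, Hn_step n (u ++ rev (seq 1 n) ++ v) (u ++ v).

Definition Hn_eq (n : nat) : word -> word -> Prop :=
  clos_refl_sym_trans word (Hn_step n).

Definition even_word (w : word) : Prop := Nat.Even (length w).

(** rho encodes a homomorphism G_n -> PU(W): on valid words of even length
    (elements of G_n) it takes values in U(W), and modulo scalars it is
    compatible with the relations of H_n and multiplicative. *)
Definition Gn_rep (n : nat) (H : hform) (rho : word -> mat) : Prop :=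
  (forall w, valid_word n w -> even_word w -> is_unitary H (rho w)) /\
  proj_eq (rho []) mat_one /\
  (forall u v, valid_word n u -> even_word u -> valid_word n v -> even_word v ->
     proj_eq (rho (u ++ v)) (mat_mul (rho u) (rho v))) /\
  (forall u v, valid_word n u -> even_word u -> valid_word n v -> even_word v ->
     Hn_eq n u v -> proj_eq (rho u) (rho v)).

Definition vword (i : nat) : word := rev (seq 1 i).

Definition wword (n j : nat) : word :=
  let w0 i := if Nat.even i then vword i else vword i ++ [n] in
  if (j <? n - 1)%nat then w0 j
  else [n] ++ w0 (j - (n - 1))%nat ++ [n].

Definition Area_pts (n : nat) (rho : word -> mat) (p q : vec) : list vec :=
  map (fun j => mat_app (rho (wword n j)) (if Nat.even j then p else q))
      (seq 0 (2 * n - 2)).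

Definition Area_n (H : hform) (n : nat) (rho : word -> mat) (c p q : vec) : R :=
  area_poly H c (Area_pts n rho p q).

From Pilot Require Import Defs.
From Stdlib Require Import Reals List Arith Lia Lra Relations.
From Coquelicot Require Import Coquelicot.
Import ListNotations.
Open Scope R_scope.

(* For points of the closed ball the triple product T(x,y,z) = -<x,y><y,z><z,x> has
   nonnegative real part (a reverse Cauchy-Schwarz argument), so arg T satisfies the
   cocycle relation arg T(a,b,c) = arg T(d,a,b) + arg T(d,b,c) + arg T(d,c,a).  Hence the
   area of a polygon does not depend on the auxiliary point, and replacing its vertex x_k
   by y changes the area by 2 (arg T(x_k, x_(k-1), y) - arg T(x_k, x_(k+1), y)).
   Replacing p by p' replaces all even vertices w_j p at once.  Each of these terms is
   invariant under the group, hence determined by w_j^-1 w_(j-1) resp. w_j^-1 w_(j+1),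
   and in H_n the element w_j^-1 w_(j+1) is t_l or t_l^-1 with
   t_l = v_(l-1)^-1 r_l v_(l-1) r_n.  This pairs the backward term at 2s with the forward
   term at 2(s + n/2 - 1) mod (2n-2), so the total change vanishes; likewise for q. *)

Ltac cdestruct := repeat match goal with
  | v : vec |- _ => destruct v
  | H : hform |- _ => destruct H
  | z : C |- _ => destruct z
  end.
Ltac cunfold := unfold herm, Cconj, Cmult, Cplus, Copp, Cminus, RtoC in *; simpl in *.
Ltac cring := cdestruct; cunfold; apply injective_projections; simpl; ring.

Lemma herm_conj H z w : herm H z w = Cconj (herm H w z).
Proof. cring. Qed.

Lemma herm_eq0_sym H u v : herm H u v = RtoC 0 -> herm H v u = RtoC 0.
Proof. intros h. rewrite herm_conj, h. cunfold. f_equal; ring. Qed.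

Definition vdet (u v : vec) : C := (fst u * snd v - snd u * fst v)%C.
Definition hdet (H : hform) : C := (RtoC (ha H) * RtoC (Defs.hd H) - hb H * Cconj (hb H))%C.

Lemma herm_gram2 H u v :
  (herm H u u * herm H v v - herm H v u * herm H u v)%C
  = (Cconj (vdet u v) * hdet H * vdet u v)%C.
Proof. unfold vdet, hdet. cring. Qed.

(* The 3x3 Gram determinant of vectors of C^2 vanishes. *)
Lemma herm_gram3 H x1 x2 x3 y1 y2 y3 :
  let g i j := herm H j i in
  (g x1 y1 * g x2 y2 * g x3 y3 + g x1 y2 * g x2 y3 * g x3 y1
   + g x1 y3 * g x2 y1 * g x3 y2 - g x1 y1 * g x2 y3 * g x3 y2
   - g x1 y2 * g x2 y1 * g x3 y3 - g x1 y3 * g x2 y2 * g x3 y1)%C = RtoC 0.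
Proof. intros g. unfold g. cring. Qed.

Definition Cnorm2 (z : C) : R := Re z * Re z + Im z * Im z.
Definition hnorm H u := Re (herm H u u).

Lemma Cnorm2_ge0 z : 0 <= Cnorm2 z.
Proof. unfold Cnorm2. nra. Qed.

Lemma Cnorm2_eq0 z : Cnorm2 z = 0 -> z = RtoC 0.
Proof.
  destruct z as [a b]; unfold Cnorm2, Re, Im; simpl; intros.
  assert (a = 0) by nra. assert (b = 0) by nra. subst. reflexivity.
Qed.

Lemma Cnorm2_gt0 z : z <> RtoC 0 -> 0 < Cnorm2 z.
Proof.
  intros Hz. destruct (Rle_lt_dec (Cnorm2 z) 0) as [h|h]; auto.
  exfalso. apply Hz, Cnorm2_eq0. pose proof (Cnorm2_ge0 z). lra.
Qed.

Lemma Cmult_conj_Cnorm2 l : (l * Cconj l)%C = RtoC (Cnorm2 l).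
Proof. destruct l. unfold Cnorm2, Re, Im. cunfold. f_equal; ring. Qed.

Lemma herm_diag H u : herm H u u = RtoC (hnorm H u).
Proof.
  unfold hnorm. assert (Im (herm H u u) = 0) by (cdestruct; cunfold; unfold Im; simpl; ring).
  destruct (herm H u u) as [a b]. unfold Re, Im in *; simpl in *. subst. reflexivity.
Qed.

Lemma Cmult_integral (a b : C) : (a * b = RtoC 0)%C -> a = RtoC 0 \/ b = RtoC 0.
Proof.
  intros h. destruct (Ceq_dec a (RtoC 0)); auto. destruct (Ceq_dec b (RtoC 0)); auto.
  exfalso. exact (Cmult_neq_0 a b n n0 h).
Qed.

Definition indefinite (H : hform) := ha H * Defs.hd H - Cnorm2 (hb H) < 0.

Lemma signature_pm_indefinite H : signature_pm H -> indefinite H.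
Proof.
  unfold signature_pm, indefinite, Cnorm2. intros h.
  destruct (hb H) as [a b]. unfold Cmod in h. simpl in *.
  rewrite Rsqr_sqrt in h by nra. unfold Re, Im; simpl. lra.
Qed.

Lemma herm_gram2_Re H u v :
  hnorm H u * hnorm H v - Cnorm2 (herm H u v)
  = Cnorm2 (vdet u v) * (ha H * Defs.hd H - Cnorm2 (hb H)).
Proof.
  pose proof (herm_gram2 H u v) as G. rewrite (herm_conj H v u), !herm_diag in G.
  destruct (herm H u v) as [a b], (vdet u v) as [d1 d2], H as [h1 [h2 h3] h4].
  unfold hdet in G. apply (f_equal fst) in G. unfold Cnorm2, Re, Im. cunfold. nra.
Qed.

Section ClosedBall.
Variable H : hform.
Hypothesis Hind : indefinite H.

Lemma herm_reverse_CS u v : in_closed_ball H u -> in_closed_ball H v ->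
  hnorm H u * hnorm H v <= Cnorm2 (herm H u v).
Proof.
  intros [_ hu] [_ hv]. pose proof (herm_gram2_Re H u v). unfold indefinite in Hind.
  pose proof (Cnorm2_ge0 (vdet u v)). fold (hnorm H u) in hu. fold (hnorm H v) in hv. nra.
Qed.

Lemma herm_eq0_vdet u v : in_closed_ball H u -> in_closed_ball H v ->
  herm H u v = RtoC 0 -> vdet u v = RtoC 0.
Proof.
  intros [_ hu] [_ hv] h0. pose proof (herm_gram2_Re H u v) as E. rewrite h0 in E.
  unfold indefinite in Hind. fold (hnorm H u) in hu. fold (hnorm H v) in hv.
  apply Cnorm2_eq0. pose proof (Cnorm2_ge0 (vdet u v)).
  assert (Cnorm2 (RtoC 0) = 0) by (unfold Cnorm2, Re, Im; simpl; ring). nra.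
Qed.

End ClosedBall.

Definition vscale (l : C) (u : vec) : vec := (l * fst u, l * snd u)%C.

Lemma vdet_eq0_proportional u v : u <> (RtoC 0, RtoC 0) -> vdet u v = RtoC 0 ->
  exists l, v = vscale l u.
Proof.
  destruct u as [u1 u2], v as [v1 v2]. unfold vdet, vscale; simpl. intros hu hd0.
  destruct (Ceq_dec u1 (RtoC 0)) as [e|e].
  - subst. assert (u2 <> RtoC 0) by (intro; subst; apply hu; reflexivity).
    assert (v1 = RtoC 0).
    { assert (h : (u2 * v1 = RtoC 0)%C).
      { transitivity (- (RtoC 0 * v2 - u2 * v1))%C; [ring | rewrite hd0; ring]. }
      destruct (Cmult_integral _ _ h); [contradiction | auto]. }
    subst. exists (v2 / u2)%C. f_equal; [ring | field; auto].
  - assert (h : (u1 * v2 = u2 * v1)%C).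
    { transitivity ((u1 * v2 - u2 * v1) + u2 * v1)%C; [ring | rewrite hd0; ring]. }
    exists (v1 / u1)%C. f_equal; [field; auto |].
    replace v2 with (u1 * v2 / u1)%C by (field; auto). rewrite h. field. auto.
Qed.

Lemma herm_eq0_proportional H u v : indefinite H -> in_closed_ball H u -> in_closed_ball H v ->
  herm H u v = RtoC 0 -> exists l, l <> RtoC 0 /\ v = vscale l u.
Proof.
  intros s hu hv h0.
  destruct (vdet_eq0_proportional u v (proj1 hu) (herm_eq0_vdet H s u v hu hv h0)) as [l e].
  exists l. split; auto. intro; subst. apply (proj1 hv). unfold vscale. simpl. f_equal; ring.
Qed.

Lemma herm_vscale_l H l x y : herm H (vscale l x) y = (l * herm H x y)%C.
Proof. unfold vscale. cring. Qed.

Lemma herm_vscale_r H l x y : herm H x (vscale l y) = (Cconj l * herm H x y)%C.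
Proof. unfold vscale. cring. Qed.

Definition triple (H : hform) (x y z : vec) : C :=
  (- (herm H x y * herm H y z * herm H z x))%C.

Lemma triple_cyc H x y z : triple H y z x = triple H x y z.
Proof. unfold triple. ring. Qed.

Lemma triple_swap H x y z : triple H x z y = Cconj (triple H x y z).
Proof.
  unfold triple. rewrite (herm_conj H x z), (herm_conj H z y), (herm_conj H y x).
  rewrite Copp_conj, !Cmult_conj. ring.
Qed.

Lemma triple_vscale_l H l x y z : triple H (vscale l x) y z = (RtoC (Cnorm2 l) * triple H x y z)%C.
Proof. unfold triple. rewrite herm_vscale_l, herm_vscale_r, <- Cmult_conj_Cnorm2. ring. Qed.

Lemma triple_vscale_m H l x y z : triple H x (vscale l y) z = (RtoC (Cnorm2 l) * triple H x y z)%C.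
Proof. rewrite <- (triple_cyc H x), triple_vscale_l, triple_cyc. reflexivity. Qed.

Lemma triple_vscale_r H l x y z : triple H x y (vscale l z) = (RtoC (Cnorm2 l) * triple H x y z)%C.
Proof. rewrite <- (triple_cyc H x), triple_vscale_m, triple_cyc. reflexivity. Qed.

Lemma triple_unitary H A x y z : is_unitary H A ->
  triple H (mat_app A x) (mat_app A y) (mat_app A z) = triple H x y z.
Proof. intros U. unfold triple. rewrite !U. reflexivity. Qed.

Lemma triple_neq0 H x y z : herm H x y <> RtoC 0 -> herm H y z <> RtoC 0 ->
  herm H z x <> RtoC 0 -> triple H x y z <> RtoC 0.
Proof.
  intros h1 h2 h3 e. unfold triple in e.
  assert (h : (herm H x y * herm H y z * herm H z x = RtoC 0)%C).
  { transitivity (- triple H x y z)%C; [unfold triple; ring | unfold triple; rewrite e; ring]. }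
  destruct (Cmult_integral _ _ h) as [h'|h']; [destruct (Cmult_integral _ _ h')|]; auto.
Qed.

Lemma triple_Re_identity H x y z :
  2 * Re (triple H x y z) = hnorm H x * hnorm H y * hnorm H z - hnorm H x * Cnorm2 (herm H y z)
     - hnorm H y * Cnorm2 (herm H z x) - hnorm H z * Cnorm2 (herm H x y).
Proof.
  pose proof (herm_gram3 H x y z x y z) as G. simpl in G.
  rewrite (herm_conj H y x), (herm_conj H z y), (herm_conj H x z), !herm_diag in G.
  unfold triple.
  destruct (herm H x y) as [a1 a2], (herm H y z) as [b1 b2], (herm H z x) as [c1 c2].
  apply (f_equal fst) in G. unfold Cnorm2, Re, Im. cunfold. nra.
Qed.

Section ClosedBallTriple.
Variable H : hform.
Hypothesis Hind : indefinite H.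

Lemma triple_Re_ge0 x y z : in_closed_ball H x -> in_closed_ball H y ->
  in_closed_ball H z -> 0 <= Re (triple H x y z).
Proof.
  intros hx hy hz. pose proof (triple_Re_identity H x y z).
  pose proof (herm_reverse_CS H Hind y z hy hz). pose proof (herm_reverse_CS H Hind z x hz hx).
  pose proof (herm_reverse_CS H Hind x y hx hy).
  destruct hx as [_ a], hy as [_ b], hz as [_ c].
  fold (hnorm H x) in a. fold (hnorm H y) in b. fold (hnorm H z) in c.
  set (A := hnorm H x) in *. set (B := hnorm H y) in *. set (D := hnorm H z) in *.
  assert (- A * Cnorm2 (herm H y z) >= - A * (B * D)) by nra.
  assert (- B * Cnorm2 (herm H z x) >= - B * (D * A)) by nra.
  assert (- D * Cnorm2 (herm H x y) >= - D * (A * B)) by nra.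
  assert (A * B >= 0) by nra. assert (A * B * D <= 0) by nra. nra.
Qed.

Lemma triple_Re_eq0_isotropic x y z : in_closed_ball H x -> in_closed_ball H y ->
  in_closed_ball H z -> Re (triple H x y z) = 0 -> triple H x y z <> RtoC 0 ->
  hnorm H x = 0.
Proof.
  intros hx hy hz e0 nz. pose proof (triple_Re_identity H x y z).
  pose proof (herm_reverse_CS H Hind y z hy hz). pose proof (herm_reverse_CS H Hind z x hz hx).
  pose proof (herm_reverse_CS H Hind x y hx hy).
  assert (Np : 0 < Cnorm2 (herm H y z)).
  { apply Cnorm2_gt0. intro e. apply nz. unfold triple. rewrite e. ring. }
  destruct hx as [_ a], hy as [_ b], hz as [_ c].
  fold (hnorm H x) in a. fold (hnorm H y) in b. fold (hnorm H z) in c.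
  set (A := hnorm H x) in *. set (B := hnorm H y) in *. set (D := hnorm H z) in *.
  assert (0 <= - A * (Cnorm2 (herm H y z) - B * D)) by (apply Rmult_le_pos; lra).
  assert (0 <= - B * (Cnorm2 (herm H z x) - D * A)) by (apply Rmult_le_pos; lra).
  assert (0 <= - D * (Cnorm2 (herm H x y) - A * B)) by (apply Rmult_le_pos; lra).
  assert (A * B >= 0) by nra. assert (A * B * D <= 0) by nra.
  assert (Z : A * Cnorm2 (herm H y z) = 0) by nra.
  apply Rmult_integral in Z. destruct Z; auto. lra.
Qed.

End ClosedBallTriple.

Lemma equal_isotropic_herm_eq0 H u v : equal_isotropic H u v -> herm H u v = RtoC 0.
Proof.
  intros [iu [iv ps]]. pose proof (herm_gram2 H u v) as G.
  unfold isotropic in iu, iv. unfold proj_same in ps. fold (vdet u v) in ps.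
  rewrite iu, iv, ps, (herm_conj H v u) in G.
  destruct (herm H u v) as [a b], (hdet H) as [d1 d2].
  apply (f_equal fst) in G. cunfold.
  assert (a = 0) by nra. assert (b = 0) by nra. subst. reflexivity.
Qed.

Lemma arg_0 : arg (RtoC 0) = 0.
Proof. unfold arg, RtoC, Re, Im; simpl. destruct (Rlt_dec 0 0); lra. Qed.

Lemma area_tri_triple H x y z : area_tri H x y z = 2 * arg (triple H x y z).
Proof.
  unfold area_tri. destruct (Pdec _) as [h|h]; auto.
  assert (E : triple H x y z = RtoC 0).
  { unfold triple. destruct h as [h|[h|h]]; apply equal_isotropic_herm_eq0 in h; rewrite h; ring. }
  rewrite E, arg_0. ring.
Qed.

Lemma Cmod_split x y : x <> 0 -> sqrt (x ^ 2 + y ^ 2) = Rabs x * sqrt (1 + (y / x)²).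
Proof.
  intros hx.
  replace (x ^ 2 + y ^ 2) with ((Rabs x * Rabs x) * (1 + (y / x)²)).
  - rewrite sqrt_mult, sqrt_square; auto using Rabs_pos, Rmult_le_pos.
    pose proof (Rle_0_sqr (y / x)). lra.
  - rewrite <- Rabs_mult, Rabs_right by nra. unfold Rsqr. field. auto.
Qed.

Lemma Cmod_cos_sin_arg z : Cmod z * cos (arg z) = Re z /\ Cmod z * sin (arg z) = Im z.
Proof.
  destruct z as [x y]. unfold arg, Cmod, Re, Im; simpl fst; simpl snd.
  assert (hs : forall t, 0 < sqrt (1 + t²)).
  { intros t. apply sqrt_lt_R0. pose proof (Rle_0_sqr t). lra. }
  pose proof (hs (y / x)).
  destruct (Rlt_dec 0 x) as [h|h].
  - rewrite Cmod_split, Rabs_right, cos_atan, sin_atan by lra. split; field; lra.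
  - destruct (Rlt_dec x 0) as [h2|h2].
    + rewrite Cmod_split, Rabs_left by lra.
      destruct (Rle_dec 0 y).
      * rewrite neg_cos, neg_sin, cos_atan, sin_atan. split; field; lra.
      * unfold Rminus. rewrite <- (Ropp_involutive (atan (y / x) + - PI)), cos_neg, sin_neg.
        replace (- (atan (y / x) + - PI)) with (- atan (y / x) + PI) by ring.
        rewrite neg_cos, neg_sin, cos_neg, sin_neg, cos_atan, sin_atan. split; field; lra.
    + assert (x = 0) by lra. subst x. replace (0 ^ 2 + y ^ 2) with (y * y) by ring.
      destruct (Rlt_dec 0 y).
      * rewrite sqrt_square, cos_PI2, sin_PI2 by lra. split; ring.
      * destruct (Rlt_dec y 0).
        -- replace (y * y) with ((- y) * (- y)) by ring.
           rewrite sqrt_square, cos_neg, sin_neg, cos_PI2, sin_PI2 by lra. split; ring.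
        -- assert (y = 0) by lra. subst. rewrite Rmult_0_l, sqrt_0. split; ring.
Qed.

Lemma polar_form z : z = (Cmod z * cos (arg z), Cmod z * sin (arg z)).
Proof. destruct (Cmod_cos_sin_arg z) as [-> ->]. destruct z; reflexivity. Qed.

Section ArgRightHalfPlane.
Variable z : C.
Hypothesis Hz : 0 <= Re z.

Lemma arg_bound_Re_ge0 : - (PI / 2) <= arg z <= PI / 2.
Proof.
  destruct z as [x y]. unfold arg, Re, Im in *; simpl fst in *; simpl snd in *.
  pose proof PI_RGT_0.
  destruct (Rlt_dec 0 x); [pose proof (atan_bound (y / x)); lra|].
  destruct (Rlt_dec x 0); [lra|].
  destruct (Rlt_dec 0 y); [lra|]. destruct (Rlt_dec y 0); lra.
Qed.

Lemma arg_eq_PI2 : arg z = PI / 2 -> Re z = 0 /\ 0 < Im z.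
Proof.
  destruct z as [x y]. unfold arg, Re, Im in *; simpl fst in *; simpl snd in *.
  intros e. pose proof PI_RGT_0.
  destruct (Rlt_dec 0 x); [pose proof (atan_bound (y / x)); lra|].
  destruct (Rlt_dec x 0); [lra|].
  destruct (Rlt_dec 0 y); [lra|]. destruct (Rlt_dec y 0); lra.
Qed.

Lemma arg_eq_mPI2 : arg z = - (PI / 2) -> Re z = 0 /\ Im z < 0.
Proof.
  destruct z as [x y]. unfold arg, Re, Im in *; simpl fst in *; simpl snd in *.
  intros e. pose proof PI_RGT_0.
  destruct (Rlt_dec 0 x); [pose proof (atan_bound (y / x)); lra|].
  destruct (Rlt_dec x 0); [lra|].
  destruct (Rlt_dec 0 y); [lra|]. destruct (Rlt_dec y 0); lra.
Qed.

Lemma arg_conj_Re_ge0 : arg (Cconj z) = - arg z.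
Proof.
  destruct z as [x y]. unfold arg, Cconj, Re, Im in *; simpl fst in *; simpl snd in *.
  destruct (Rlt_dec 0 x).
  - replace (- y / x) with (- (y / x)) by (field; lra). apply atan_opp.
  - destruct (Rlt_dec x 0); [lra|].
    destruct (Rlt_dec 0 (- y)), (Rlt_dec 0 y); try lra;
    destruct (Rlt_dec (- y) 0), (Rlt_dec y 0); lra.
Qed.

End ArgRightHalfPlane.

Lemma arg_scal_pos k z : 0 < k -> arg (RtoC k * z)%C = arg z.
Proof.
  intros hk. destruct z as [x y]. unfold arg, Cmult, RtoC, Re, Im; simpl fst; simpl snd.
  replace (k * x - 0 * y) with (k * x) by ring. replace (k * y + 0 * x) with (k * y) by ring.
  replace (k * y / (k * x)) with (y / x).
  2:{ destruct (Req_dec x 0).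
      - subst. unfold Rdiv. rewrite Rmult_0_r, !Rinv_0. ring.
      - field. lra. }
  destruct (Rlt_dec 0 (k * x)), (Rlt_dec 0 x); try nra;
  destruct (Rlt_dec (k * x) 0), (Rlt_dec x 0); try nra;
  destruct (Rle_dec 0 (k * y)), (Rle_dec 0 y); try nra;
  destruct (Rlt_dec 0 (k * y)), (Rlt_dec 0 y); try nra;
  destruct (Rlt_dec (k * y) 0), (Rlt_dec y 0); nra.
Qed.

Lemma arg_nonneg_real z : Im z = 0 -> 0 <= Re z -> arg z = 0.
Proof.
  destruct z as [x y]. unfold arg, Re, Im; simpl. intros -> hx.
  destruct (Rlt_dec 0 x); [unfold Rdiv; rewrite Rmult_0_l; apply atan_0|].
  destruct (Rlt_dec x 0); [lra|]. destruct (Rlt_dec 0 0); [lra|]. destruct (Rlt_dec 0 0); lra.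
Qed.

Lemma cos_eq1_small x : - (2 * PI) < x < 2 * PI -> cos x = 1 -> x = 0.
Proof.
  intros hx hc. pose proof PI_RGT_0.
  assert (hs : sin x = 0).
  { pose proof (sin2_cos2 x) as e. rewrite hc in e. unfold Rsqr in e. nra. }
  destruct (Rle_dec 0 x).
  - destruct (sin_eq_O_2PI_0 x r ltac:(lra) hs) as [e|[e|e]]; auto; try lra.
    rewrite e, cos_PI in hc. lra.
  - assert (hs' : sin (- x) = 0) by (rewrite sin_neg; lra).
    destruct (sin_eq_O_2PI_0 (- x) ltac:(lra) ltac:(lra) hs') as [e|[e|e]]; try lra.
    rewrite <- (Ropp_involutive x), cos_neg, e, cos_PI in hc. lra.
Qed.

Lemma polar_eq_cos_diff M M' a b : 0 < M -> 0 < M' ->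
  M * cos a = M' * cos b -> M * sin a = M' * sin b -> cos (a - b) = 1.
Proof.
  intros hM hM' ec es.
  pose proof (sin2_cos2 a). pose proof (sin2_cos2 b). unfold Rsqr in *.
  assert (M * M = M' * M').
  { transitivity ((M * cos a) * (M * cos a) + (M * sin a) * (M * sin a)); [nra|].
    rewrite ec, es. nra. }
  assert (M = M') by nra. subst M'.
  assert (cos a = cos b) by (apply Rmult_eq_reg_l with M; lra).
  assert (sin a = sin b) by (apply Rmult_eq_reg_l with M; lra).
  rewrite cos_minus. nra.
Qed.

(* Additivity of [arg] on the closed right half-plane, away from the two ways the
   sum of three arguments in [-PI/2, PI/2] can reach [3 PI / 2]. *)
Lemma arg_mult3 X Y Z W k : 0 < k ->
  X <> RtoC 0 -> Y <> RtoC 0 -> Z <> RtoC 0 -> W <> RtoC 0 ->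
  0 <= Re X -> 0 <= Re Y -> 0 <= Re Z -> 0 <= Re W ->
  (X * Y * Z = RtoC k * W)%C ->
  ~ (arg X = PI / 2 /\ arg Y = PI / 2 /\ arg Z = PI / 2 /\ arg W = - (PI / 2)) ->
  ~ (arg X = - (PI / 2) /\ arg Y = - (PI / 2) /\ arg Z = - (PI / 2) /\ arg W = PI / 2) ->
  arg X + arg Y + arg Z = arg W.
Proof.
  intros hk nX nY nZ nW rX rY rZ rW E b1 b2.
  pose proof (arg_bound_Re_ge0 X rX). pose proof (arg_bound_Re_ge0 Y rY).
  pose proof (arg_bound_Re_ge0 Z rZ). pose proof (arg_bound_Re_ge0 W rW).
  pose proof PI_RGT_0.
  apply Cmod_gt_0 in nX, nY, nZ, nW.
  rewrite (polar_form X), (polar_form Y), (polar_form Z), (polar_form W) in E.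
  set (a := arg X) in *. set (b := arg Y) in *. set (c := arg Z) in *. set (t := arg W) in *.
  set (M := Cmod X * Cmod Y * Cmod Z).
  assert (E1 := f_equal fst E). assert (E2 := f_equal snd E).
  unfold Cmult, RtoC in E1, E2. simpl in E1, E2.
  assert (cos (a + b + c - t) = 1).
  { apply (polar_eq_cos_diff M (k * Cmod W)).
    - unfold M. repeat apply Rmult_lt_0_compat; auto.
    - apply Rmult_lt_0_compat; auto.
    - unfold M. repeat rewrite ?cos_plus, ?sin_plus. nra.
    - unfold M. repeat rewrite ?cos_plus, ?sin_plus. nra. }
  assert (a + b + c - t = 0).
  { apply cos_eq1_small; auto. split.
    - destruct (Req_dec (a + b + c - t) (- (2 * PI))); [|lra]. exfalso. apply b2. lra.
    - destruct (Req_dec (a + b + c - t) (2 * PI)); [|lra]. exfalso. apply b1. lra. }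
  lra.
Qed.

Definition tri_arg (H : hform) (x y z : vec) : R := arg (triple H x y z).

Lemma area_tri_tri_arg H x y z : area_tri H x y z = 2 * tri_arg H x y z.
Proof. apply area_tri_triple. Qed.

Lemma tri_arg_unitary H A x y z : is_unitary H A ->
  tri_arg H (mat_app A x) (mat_app A y) (mat_app A z) = tri_arg H x y z.
Proof. intros U. unfold tri_arg. rewrite triple_unitary; auto. Qed.

Lemma tri_arg_vscale_l H l x y z : l <> RtoC 0 -> tri_arg H (vscale l x) y z = tri_arg H x y z.
Proof. intros. unfold tri_arg. rewrite triple_vscale_l. apply arg_scal_pos, Cnorm2_gt0; auto. Qed.

Lemma tri_arg_vscale_r H l x y z : l <> RtoC 0 -> tri_arg H x y (vscale l z) = tri_arg H x y z.
Proof. intros. unfold tri_arg. rewrite triple_vscale_r. apply arg_scal_pos, Cnorm2_gt0; auto. Qed.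

Lemma tri_arg_vscale H a b c x y z : a <> RtoC 0 -> b <> RtoC 0 -> c <> RtoC 0 ->
  tri_arg H (vscale a x) (vscale b y) (vscale c z) = tri_arg H x y z.
Proof.
  intros. rewrite tri_arg_vscale_l, tri_arg_vscale_r by auto.
  unfold tri_arg. rewrite triple_vscale_m. apply arg_scal_pos, Cnorm2_gt0; auto.
Qed.

Lemma tri_arg_herm_eq0_l H x y z : herm H x y = RtoC 0 -> tri_arg H x y z = 0.
Proof.
  intros h. unfold tri_arg, triple. rewrite h.
  replace (- (RtoC 0 * herm H y z * herm H z x))%C with (RtoC 0) by ring. apply arg_0.
Qed.

Lemma tri_arg_herm_eq0_m H x y z : herm H y z = RtoC 0 -> tri_arg H x y z = 0.
Proof. intros h. unfold tri_arg. rewrite <- triple_cyc. apply tri_arg_herm_eq0_l; auto. Qed.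

Lemma tri_arg_herm_eq0_r H x y z : herm H z x = RtoC 0 -> tri_arg H x y z = 0.
Proof. intros h. unfold tri_arg. rewrite triple_cyc. apply tri_arg_herm_eq0_l; auto. Qed.

Lemma tri_arg_cyc H x y z : tri_arg H y z x = tri_arg H x y z.
Proof. unfold tri_arg. rewrite triple_cyc. reflexivity. Qed.

(* The coefficient identity behind the degenerate case of the cocycle relation, where
   [D] is the Gram determinant of [herm_gram3] for [(c, a, b; d, a, b)]. *)
Lemma isotropic_cocycle_algebra (ab bc ca da db dc : C) :
  let X := (- (da * ab * Cconj db))%C in let Y := (- (db * bc * Cconj dc))%C in
  let W := (- (ab * bc * ca))%C in
  let D := (- (dc * Cconj ab * ab) + Cconj ca * Cconj ab * db + bc * da * ab)%C in
  (RtoC (Cnorm2 ab) * Y + RtoC (Cnorm2 bc) * X - RtoC (Cnorm2 db) * W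
   - RtoC (Cnorm2 bc) * (X + Cconj X) = db * bc * Cconj D)%C.
Proof.
  destruct ab, bc, ca, da, db, dc. unfold Cnorm2, Re, Im. cunfold.
  apply injective_projections; simpl; ring.
Qed.

Lemma isotropic_triple_Im_relation H a b c d : hnorm H a = 0 -> hnorm H b = 0 ->
  Cnorm2 (herm H a b) * Im (triple H d b c) + Cnorm2 (herm H b c) * Im (triple H d a b)
  - Cnorm2 (herm H d b) * Im (triple H a b c) = 0.
Proof.
  intros ha0 hb0.
  pose proof (herm_gram3 H c a b d a b) as G. simpl in G.
  rewrite !herm_diag, ha0, hb0, (herm_conj H a c), (herm_conj H b a) in G.
  pose proof (isotropic_cocycle_algebra (herm H a b) (herm H b c) (herm H c a)
                (herm H d a) (herm H d b) (herm H d c)) as K. simpl in K.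
  assert (Dz : (- (herm H d c * Cconj (herm H a b) * herm H a b)
     + Cconj (herm H c a) * Cconj (herm H a b) * herm H d b
     + herm H b c * herm H d a * herm H a b)%C = RtoC 0) by (rewrite <- G; ring).
  rewrite Dz in K. apply (f_equal snd) in K.
  unfold triple. rewrite (herm_conj H c d), (herm_conj H b d).
  set (X := (- (herm H d a * herm H a b * Cconj (herm H d b)))%C) in *.
  set (Y := (- (herm H d b * herm H b c * Cconj (herm H d c)))%C) in *.
  set (W := (- (herm H a b * herm H b c * herm H c a))%C) in *.
  destruct X as [x1 x2], Y as [y1 y2], W as [w1 w2], (herm H d b), (herm H b c).
  unfold Im. cunfold. nra.
Qed.

Section Cocycle.
Variable H : hform.
Hypothesis Hind : indefinite H.

Lemma tri_arg_swap x y z : in_closed_ball H x -> in_closed_ball H y ->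
  in_closed_ball H z -> tri_arg H x z y = - tri_arg H x y z.
Proof. intros. unfold tri_arg. rewrite triple_swap. apply arg_conj_Re_ge0, triple_Re_ge0; auto. Qed.

Lemma tri_arg_diag x y : in_closed_ball H x -> tri_arg H x x y = 0.
Proof.
  intros [_ hx]. unfold tri_arg, triple.
  rewrite herm_diag, (herm_conj H y x). fold (hnorm H x) in hx.
  destruct (herm H x y). apply arg_nonneg_real; unfold Im, Re; cunfold; nra.
Qed.

Lemma tri_arg_diag_r x y : in_closed_ball H x -> tri_arg H x y x = 0.
Proof. intros. rewrite (tri_arg_cyc H x x y). apply tri_arg_diag; auto. Qed.

(* When [Re T(a,b,c) = 0] the points [a], [b] are isotropic, and then
   [isotropic_triple_Im_relation] forbids the imaginary parts to have the signs
   required by an exceptional configuration of [arg_mult3]. *)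
Lemma tri_arg_exceptional_absurd a b c d s :
  in_closed_ball H a -> in_closed_ball H b -> in_closed_ball H c -> in_closed_ball H d ->
  herm H a b <> RtoC 0 -> herm H b c <> RtoC 0 -> herm H d b <> RtoC 0 ->
  triple H a b c <> RtoC 0 ->
  Re (triple H a b c) = 0 -> s * Im (triple H a b c) < 0 ->
  0 < s * Im (triple H d a b) -> 0 < s * Im (triple H d b c) -> False.
Proof.
  intros ha hb hc hd nab nbc ndb Wn r4 i4 i1 i2.
  pose proof (triple_Re_eq0_isotropic H Hind a b c ha hb hc r4 Wn) as za.
  assert (zb : hnorm H b = 0).
  { apply (triple_Re_eq0_isotropic H Hind b c a); auto; rewrite triple_cyc; auto. }
  pose proof (isotropic_triple_Im_relation H a b c d za zb) as R.
  apply (f_equal (Rmult s)) in R. rewrite Rmult_0_r in R.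
  pose proof (Cnorm2_gt0 _ nab). pose proof (Cnorm2_gt0 _ nbc). pose proof (Cnorm2_gt0 _ ndb).
  nra.
Qed.

Lemma tri_arg_cocycle_generic a b c d :
  in_closed_ball H a -> in_closed_ball H b -> in_closed_ball H c -> in_closed_ball H d ->
  herm H d a <> RtoC 0 -> herm H d b <> RtoC 0 -> herm H d c <> RtoC 0 ->
  herm H a b <> RtoC 0 -> herm H b c <> RtoC 0 -> herm H c a <> RtoC 0 ->
  tri_arg H a b c = tri_arg H d a b + tri_arg H d b c + tri_arg H d c a.
Proof.
  intros ha hb hc hd nda ndb ndc nab nbc nca.
  assert (nz : forall u v, herm H u v <> RtoC 0 -> herm H v u <> RtoC 0)
    by (intros u v h1 h2; apply h1, herm_eq0_sym; auto).
  assert (Wn : triple H a b c <> RtoC 0) by (apply triple_neq0; auto).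
  unfold tri_arg. symmetry.
  apply (arg_mult3 _ _ _ _ (Cnorm2 (herm H d a) * Cnorm2 (herm H d b) * Cnorm2 (herm H d c)));
    try (apply triple_neq0; auto); try (apply triple_Re_ge0; auto).
  - repeat apply Rmult_lt_0_compat; apply Cnorm2_gt0; auto.
  - unfold triple. rewrite (herm_conj H b d), (herm_conj H c d), (herm_conj H a d).
    rewrite !RtoC_mult, <- !Cmult_conj_Cnorm2. ring.
  - intros [h1 [h2 [_ h4]]].
    destruct (arg_eq_PI2 _ (triple_Re_ge0 H Hind d a b hd ha hb) h1) as [_ i1].
    destruct (arg_eq_PI2 _ (triple_Re_ge0 H Hind d b c hd hb hc) h2) as [_ i2].
    destruct (arg_eq_mPI2 _ (triple_Re_ge0 H Hind a b c ha hb hc) h4) as [r4 i4].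
    apply (tri_arg_exceptional_absurd a b c d 1); auto; lra.
  - intros [h1 [h2 [_ h4]]].
    destruct (arg_eq_mPI2 _ (triple_Re_ge0 H Hind d a b hd ha hb) h1) as [_ i1].
    destruct (arg_eq_mPI2 _ (triple_Re_ge0 H Hind d b c hd hb hc) h2) as [_ i2].
    destruct (arg_eq_PI2 _ (triple_Re_ge0 H Hind a b c ha hb hc) h4) as [r4 i4].
    apply (tri_arg_exceptional_absurd a b c d (-1)); auto; lra.
Qed.

(* Orthogonal points of the closed ball are proportional, which disposes of the
   degenerate cases. *)
Lemma tri_arg_cocycle a b c d :
  in_closed_ball H a -> in_closed_ball H b -> in_closed_ball H c -> in_closed_ball H d ->
  tri_arg H a b c = tri_arg H d a b + tri_arg H d b c + tri_arg H d c a.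
Proof.
  intros ha hb hc hd.
  pose proof (herm_eq0_proportional H) as prop.
  destruct (Ceq_dec (herm H d a) (RtoC 0)) as [e|nda].
  { destruct (prop a d Hind ha hd (herm_eq0_sym _ _ _ e)) as [l [nl ->]].
    rewrite (tri_arg_herm_eq0_l H _ a b e), (tri_arg_herm_eq0_r H _ c a (herm_eq0_sym _ _ _ e)),
      tri_arg_vscale_l by auto. ring. }
  destruct (Ceq_dec (herm H d b) (RtoC 0)) as [e|ndb].
  { destruct (prop b d Hind hb hd (herm_eq0_sym _ _ _ e)) as [l [nl ->]].
    rewrite (tri_arg_herm_eq0_r H _ a b (herm_eq0_sym _ _ _ e)), (tri_arg_herm_eq0_l H _ b c e),
      tri_arg_vscale_l, (tri_arg_cyc H a b c) by auto. ring. }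
  destruct (Ceq_dec (herm H d c) (RtoC 0)) as [e|ndc].
  { destruct (prop c d Hind hc hd (herm_eq0_sym _ _ _ e)) as [l [nl ->]].
    rewrite (tri_arg_herm_eq0_r H _ b c (herm_eq0_sym _ _ _ e)), (tri_arg_herm_eq0_l H _ c a e),
      tri_arg_vscale_l, <- (tri_arg_cyc H c a b) by auto. ring. }
  destruct (Ceq_dec (herm H a b) (RtoC 0)) as [e|nab].
  { rewrite (tri_arg_herm_eq0_l H a b c e), (tri_arg_herm_eq0_m H d a b e).
    destruct (prop b a Hind hb ha (herm_eq0_sym _ _ _ e)) as [l [nl ->]].
    rewrite tri_arg_vscale_r, (tri_arg_swap d b c) by auto. ring. }
  destruct (Ceq_dec (herm H b c) (RtoC 0)) as [e|nbc].
  { rewrite (tri_arg_herm_eq0_m H a b c e), (tri_arg_herm_eq0_m H d b c e).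
    destruct (prop c b Hind hc hb (herm_eq0_sym _ _ _ e)) as [l [nl ->]].
    rewrite tri_arg_vscale_r, (tri_arg_swap d c a) by auto. ring. }
  destruct (Ceq_dec (herm H c a) (RtoC 0)) as [e|nca].
  { rewrite (tri_arg_herm_eq0_r H a b c e), (tri_arg_herm_eq0_m H d c a e).
    destruct (prop a c Hind ha hc (herm_eq0_sym _ _ _ e)) as [l [nl ->]].
    rewrite tri_arg_vscale_r, (tri_arg_swap d a b) by auto. ring. }
  apply tri_arg_cocycle_generic; auto.
Qed.

End Cocycle.

Fixpoint psum (f : nat -> R) (k : nat) : R :=
  match k with O => 0 | S k => psum f k + f k end.

Lemma psum_ext f g k : (forall j, (j < k)%nat -> f j = g j) -> psum f k = psum g k.
Proof.
  induction k; simpl; intros h; auto.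
  rewrite IHk by (intros; apply h; lia). rewrite h by lia. auto.
Qed.

Lemma psum_shift f k : psum f (S k) = f O + psum (fun j => f (S j)) k.
Proof. induction k; simpl in *; [ring | rewrite IHk; ring]. Qed.

Lemma psum_plus f g k : psum (fun j => f j + g j) k = psum f k + psum g k.
Proof. induction k; simpl; [ring | rewrite IHk; ring]. Qed.

Lemma psum_minus f g k : psum (fun j => f j - g j) k = psum f k - psum g k.
Proof. induction k; simpl; [ring | rewrite IHk; ring]. Qed.

Lemma psum_telescope g k : psum (fun j => g j - g (S j)) k = g O - g k.
Proof. induction k; simpl; [ring | rewrite IHk; ring]. Qed.

Lemma psum_add f a b : psum f (a + b) = psum f a + psum (fun t => f (a + t)%nat) b.
Proof.
  induction b; simpl; [rewrite Nat.add_0_r; ring|].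
  rewrite Nat.add_succ_r. simpl. rewrite IHb. ring.
Qed.

Lemma psum_update1 f g k a : (a < k)%nat ->
  (forall j, (j < k)%nat -> j <> a -> f j = g j) ->
  psum f k = psum g k + (f a - g a).
Proof.
  induction k; intros ha h; [lia|]. simpl.
  destruct (Nat.eq_dec a k).
  - subst. rewrite (psum_ext f g k) by (intros; apply h; lia). ring.
  - rewrite IHk, (h k) by (try lia; intros; apply h; lia). ring.
Qed.

Lemma psum_update2 f g k a b : (a < k)%nat -> (b < k)%nat -> a <> b ->
  (forall j, (j < k)%nat -> j <> a -> j <> b -> f j = g j) ->
  psum f k = psum g k + (f a - g a) + (f b - g b).
Proof.
  intros ha hb nab h.
  set (fb := fun j => if Nat.eq_dec j b then g b else f j).
  rewrite (psum_update1 f fb k b hb).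
  2:{ intros j hj nj. unfold fb. destruct (Nat.eq_dec j b); [lia | auto]. }
  rewrite (psum_update1 fb g k a ha).
  2:{ intros j hj nj. unfold fb. destruct (Nat.eq_dec j b); auto. }
  unfold fb. destruct (Nat.eq_dec a b); [lia|]. destruct (Nat.eq_dec b b); [|lia]. ring.
Qed.

Lemma psum_rotate f M K : (K <= M)%nat ->
  psum (fun t => f ((t + K) mod M)%nat) M = psum f M.
Proof.
  intros hK. destruct (Nat.eq_dec M 0); [subst; reflexivity|].
  replace M with ((M - K) + K)%nat at 1 by lia. rewrite psum_add.
  rewrite (psum_ext _ (fun t => f (K + t)%nat) (M - K)).
  2:{ intros j hj. f_equal. rewrite Nat.mod_small; lia. }
  rewrite (psum_ext _ f K).
  2:{ intros j hj. f_equal. replace (M - K + j + K)%nat with (j + 1 * M)%nat by lia.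
      rewrite Nat.Div0.mod_add. apply Nat.mod_small. lia. }
  assert (E : psum f M = psum f (K + (M - K))) by (f_equal; lia).
  rewrite E, psum_add. ring.
Qed.

(* Half the area of the polygon [X 0, ..., X (m-1)], computed from the point [c]. *)
Definition poly_arg H c (X : nat -> vec) (m : nat) : R :=
  psum (fun j => tri_arg H c (X j) (X (S j))) (m - 1) + tri_arg H c (X (m - 1)%nat) (X O).

Lemma poly_arg_ext H c X X' m : (1 <= m)%nat -> (forall j, (j < m)%nat -> X j = X' j) ->
  poly_arg H c X m = poly_arg H c X' m.
Proof.
  intros hm h. unfold poly_arg.
  rewrite (psum_ext _ (fun j => tri_arg H c (X' j) (X' (S j)))).
  - rewrite !h by lia. reflexivity.
  - intros j hj. rewrite !h by lia. reflexivity.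
Qed.

Lemma area_chain_map H c first X s k :
  area_chain H c first (map X (seq s (S k))) =
  2 * psum (fun j => tri_arg H c (X (s + j)%nat) (X (S (s + j)))) k
  + area_tri H c (X (s + k)%nat) first.
Proof.
  revert s. induction k; intros s; [simpl; rewrite Nat.add_0_r; ring|].
  change (map X (seq s (S (S k)))) with (X s :: map X (seq (S s) (S k))).
  change (area_chain H c first (X s :: map X (seq (S s) (S k))))
    with (area_tri H c (X s) (X (S s)) + area_chain H c first (map X (seq (S s) (S k)))).
  rewrite IHk, psum_shift, area_tri_tri_arg, Nat.add_0_r.
  replace (S s + k)%nat with (s + S k)%nat by lia.
  rewrite (psum_ext (fun j => tri_arg H c (X (S s + j)%nat) (X (S (S s + j))))
                    (fun j => tri_arg H c (X (s + S j)%nat) (X (S (s + S j))))).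
  - ring.
  - intros j _. replace (S s + j)%nat with (s + S j)%nat by lia. reflexivity.
Qed.

Lemma area_poly_poly_arg H c X m : (1 <= m)%nat ->
  area_poly H c (map X (seq 0 m)) = 2 * poly_arg H c X m.
Proof.
  intros hm. destruct m as [|m]; [lia|]. unfold area_poly.
  change (map X (seq 0 (S m))) with (X O :: map X (seq 1 m)). cbv iota beta.
  change (X O :: map X (seq 1 m)) with (map X (seq 0 (S m))).
  rewrite area_chain_map, area_tri_tri_arg. unfold poly_arg. simpl. rewrite Nat.sub_0_r. ring.
Qed.

Section Polygons.
Variable H : hform.
Hypothesis Hind : indefinite H.

Lemma poly_arg_center_indep c c' X m : (1 <= m)%nat ->
  in_closed_ball H c -> in_closed_ball H c' ->
  (forall j, (j < m)%nat -> in_closed_ball H (X j)) -> poly_arg H c X m = poly_arg H c' X m.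
Proof.
  intros hm hc hc' hX.
  set (g := fun j => tri_arg H c' c (X j)).
  assert (K : forall j k, (j < m)%nat -> (k < m)%nat ->
     tri_arg H c (X j) (X k) = tri_arg H c' (X j) (X k) + g j - g k).
  { intros j k hj hk. unfold g.
    rewrite (tri_arg_cocycle H Hind c (X j) (X k) c'), (tri_arg_swap H Hind c' (X k) c); auto.
    ring. }
  unfold poly_arg.
  rewrite (psum_ext _ (fun j => tri_arg H c' (X j) (X (S j)) + (g j - g (S j))) (m - 1)).
  2:{ intros j hj. rewrite K by lia. ring. }
  rewrite psum_plus, psum_telescope, K by lia. replace (m - 1 + 0)%nat with (m - 1)%nat by lia.
  ring.
Qed.

Lemma tri_arg_vertex_change c P E E' N :
  in_closed_ball H c -> in_closed_ball H P -> in_closed_ball H E ->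
  in_closed_ball H E' -> in_closed_ball H N ->
  (tri_arg H c P E' - tri_arg H c P E) + (tri_arg H c E' N - tri_arg H c E N)
  = tri_arg H E P E' - tri_arg H E N E'.
Proof.
  intros hc hP hE hE' hN.
  rewrite (tri_arg_cocycle H Hind c P E' E), (tri_arg_cocycle H Hind c P E E),
    (tri_arg_cocycle H Hind c E' N E), (tri_arg_cocycle H Hind c E N E) by auto.
  rewrite (tri_arg_diag_r H E P), (tri_arg_diag H E c), (tri_arg_diag_r H E c),
    (tri_arg_diag H E N) by auto.
  rewrite (tri_arg_swap H Hind E E' c), (tri_arg_swap H Hind E N E') by auto. ring.
Qed.

End Polygons.

Definition fupdate (X : nat -> vec) k (Y : vec) := fun j => if Nat.eq_dec j k then Y else X j.
Definition cyc_prev (m k : nat) := if Nat.eq_dec k 0 then (m - 1)%nat else (k - 1)%nat.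
Definition cyc_next (m k : nat) := if Nat.eq_dec k (m - 1) then O else S k.

Lemma cyc_prev_lt m k : (k < m)%nat -> (cyc_prev m k < m)%nat.
Proof. unfold cyc_prev. destruct (Nat.eq_dec k 0); lia. Qed.

Lemma cyc_next_lt m k : (k < m)%nat -> (cyc_next m k < m)%nat.
Proof. unfold cyc_next. destruct (Nat.eq_dec k (m - 1)); lia. Qed.

Lemma cyc_next_prev m k : (k < m)%nat -> cyc_next m (cyc_prev m k) = k.
Proof.
  unfold cyc_next, cyc_prev. intros.
  destruct (Nat.eq_dec k 0); [destruct (Nat.eq_dec (m - 1) (m - 1))|destruct (Nat.eq_dec (k - 1) (m - 1))]; lia.
Qed.

Lemma even_cyc_prev m k : Nat.Even m -> (k < m)%nat ->
  Nat.even (cyc_prev m k) = negb (Nat.even k).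
Proof.
  intros [M ->] hk. unfold cyc_prev. destruct (Nat.eq_dec k 0).
  - subst. replace (2 * M - 1)%nat with (2 * (M - 1) + 1)%nat by lia. rewrite Nat.even_odd. auto.
  - replace k with (S (k - 1)) at 2 by lia.
    rewrite Nat.even_succ, <- Nat.negb_even, Bool.negb_involutive. auto.
Qed.

Lemma even_cyc_next m k : Nat.Even m -> (k < m)%nat ->
  Nat.even (cyc_next m k) = negb (Nat.even k).
Proof.
  intros [M ->] hk. unfold cyc_next. destruct (Nat.eq_dec k (2 * M - 1)).
  - subst. replace (2 * M - 1)%nat with (2 * (M - 1) + 1)%nat by lia. rewrite Nat.even_odd. auto.
  - rewrite Nat.even_succ, <- Nat.negb_even. auto.
Qed.

Section VertexChange.
Variable H : hform.
Hypothesis Hind : indefinite H.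

Definition vertex_defect (X Y : nat -> vec) m k :=
  tri_arg H (X k) (X (cyc_prev m k)) (Y k) - tri_arg H (X k) (X (cyc_next m k)) (Y k).

Lemma poly_arg_fupdate c X Y m k : (3 <= m)%nat -> (k < m)%nat ->
  in_closed_ball H c -> (forall j, (j < m)%nat -> in_closed_ball H (X j)) ->
  in_closed_ball H (Y k) ->
  poly_arg H c (fupdate X k (Y k)) m = poly_arg H c X m + vertex_defect X Y m k.
Proof.
  intros hm hk hc hX hY. unfold poly_arg, vertex_defect, cyc_prev, cyc_next.
  set (e := fun j => tri_arg H c (X j) (X (S j))).
  pose proof (tri_arg_vertex_change H Hind c) as V.
  destruct (Nat.eq_dec k 0) as [e0|n0]; [|destruct (Nat.eq_dec k (m - 1)) as [e1|n1]].
  - subst k. destruct (Nat.eq_dec 0 (m - 1)); [lia|].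
    rewrite (psum_update1 _ e (m - 1) 0) by
      (try lia; intros j hj nj; unfold fupdate, e;
       destruct (Nat.eq_dec j 0), (Nat.eq_dec (S j) 0); try lia; auto).
    unfold fupdate, e. destruct (Nat.eq_dec 0 0), (Nat.eq_dec 1 0), (Nat.eq_dec (m - 1) 0); try lia.
    pose proof (V (X (m - 1)%nat) (X O) (Y O) (X 1%nat) hc
                  (hX (m - 1)%nat ltac:(lia)) (hX O ltac:(lia)) hY (hX 1%nat ltac:(lia))).
    lra.
  - subst k.
    rewrite (psum_update1 _ e (m - 1) (m - 2)) by
      (try lia; intros j hj nj; unfold fupdate, e;
       destruct (Nat.eq_dec j (m - 1)), (Nat.eq_dec (S j) (m - 1)); try lia; auto).
    unfold fupdate, e.
    destruct (Nat.eq_dec (m - 2) (m - 1)), (Nat.eq_dec (S (m - 2)) (m - 1)),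
      (Nat.eq_dec (m - 1) (m - 1)), (Nat.eq_dec 0 (m - 1)); try lia.
    replace (S (m - 2)) with (m - 1)%nat by lia. replace (m - 1 - 1)%nat with (m - 2)%nat by lia.
    pose proof (V (X (m - 2)%nat) (X (m - 1)%nat) (Y (m - 1)%nat) (X O) hc
                  (hX (m - 2)%nat ltac:(lia)) (hX (m - 1)%nat ltac:(lia)) hY (hX O ltac:(lia))).
    lra.
  - rewrite (psum_update2 _ e (m - 1) (k - 1) k) by
      (try lia; intros j hj nj nj'; unfold fupdate, e;
       destruct (Nat.eq_dec j k), (Nat.eq_dec (S j) k); try lia; auto).
    unfold fupdate, e.
    destruct (Nat.eq_dec (k - 1) k), (Nat.eq_dec (S (k - 1)) k), (Nat.eq_dec k k),
      (Nat.eq_dec (S k) k), (Nat.eq_dec (m - 1) k), (Nat.eq_dec 0 k); try lia.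
    replace (S (k - 1)) with k by lia.
    pose proof (V (X (k - 1)%nat) (X k) (Y k) (X (S k)) hc
                  (hX (k - 1)%nat ltac:(lia)) (hX k ltac:(lia)) hY (hX (S k) ltac:(lia))).
    lra.
Qed.

Fixpoint replace_class (X Y : nat -> vec) (b t : nat) : nat -> vec :=
  match t with
  | O => X
  | S t => fupdate (replace_class X Y b t) (2 * t + b) (Y (2 * t + b)%nat)
  end.

Lemma replace_class_or X Y b t j :
  replace_class X Y b t j = X j \/ replace_class X Y b t j = Y j.
Proof.
  induction t; cbn [replace_class]; [left; reflexivity|].
  unfold fupdate. destruct (Nat.eq_dec j (2 * t + b)); [right; subst; reflexivity | exact IHt].
Qed.

Lemma replace_class_old X Y b t j : (forall s, (s < t)%nat -> j <> (2 * s + b)%nat) ->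
  replace_class X Y b t j = X j.
Proof.
  induction t; cbn [replace_class]; [reflexivity|]. intros h. unfold fupdate.
  destruct (Nat.eq_dec j (2 * t + b)); [exfalso; apply (h t); auto | apply IHt; intros; apply h; lia].
Qed.

Lemma replace_class_new X Y b t s : (s < t)%nat ->
  replace_class X Y b t (2 * s + b)%nat = Y (2 * s + b)%nat.
Proof.
  induction t; cbn [replace_class]; intros h; [lia|]. unfold fupdate.
  destruct (Nat.eq_dec (2 * s + b) (2 * t + b)) as [e|]; [rewrite e; auto | apply IHt; lia].
Qed.

Lemma parity_neq_class j b s : (b <= 1)%nat -> Nat.even j <> Nat.even b -> j <> (2 * s + b)%nat.
Proof. intros hb hne e. subst. apply hne. rewrite Nat.add_comm, Nat.even_add_mul_2. auto. Qed.

Lemma poly_arg_replace_class c X Y b M t : (2 <= M)%nat -> (b <= 1)%nat -> (t <= M)%nat ->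
  in_closed_ball H c ->
  (forall j, (j < 2 * M)%nat -> in_closed_ball H (X j)) ->
  (forall j, (j < 2 * M)%nat -> in_closed_ball H (Y j)) ->
  poly_arg H c (replace_class X Y b t) (2 * M)
  = poly_arg H c X (2 * M) + psum (fun s => vertex_defect X Y (2 * M) (2 * s + b)) t.
Proof.
  intros hM hb ht hc hX hY. induction t; cbn [replace_class psum]; [ring|].
  assert (Ev : Nat.Even (2 * M)) by (exists M; auto).
  assert (other : forall k, (k < 2 * M)%nat -> Nat.even k = negb (Nat.even (2 * t + b)) ->
                   replace_class X Y b t k = X k).
  { intros k hk ek. apply replace_class_old. intros s0 _. apply parity_neq_class; auto.
    rewrite ek, Nat.add_comm, Nat.even_add_mul_2. destruct (Nat.even b); discriminate. }
  rewrite poly_arg_fupdate, IHt; try (auto; lia).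
  - unfold vertex_defect.
    rewrite (replace_class_old X Y b t (2 * t + b)) by (intros; lia).
    rewrite (other (cyc_prev (2 * M) (2 * t + b))), (other (cyc_next (2 * M) (2 * t + b))).
    + ring.
    + apply cyc_next_lt. lia.
    + apply even_cyc_next; auto. lia.
    + apply cyc_prev_lt. lia.
    + apply even_cyc_prev; auto. lia.
  - intros j hj. destruct (replace_class_or X Y b t j) as [-> | ->]; auto.
  - apply hY. lia.
Qed.

Lemma poly_arg_replace_parity c X Y b M : (2 <= M)%nat -> (b <= 1)%nat ->
  in_closed_ball H c ->
  (forall j, (j < 2 * M)%nat -> in_closed_ball H (X j)) ->
  (forall j, (j < 2 * M)%nat -> in_closed_ball H (Y j)) ->
  poly_arg H c (fun j => if Bool.eqb (Nat.even j) (Nat.even b) then Y j else X j) (2 * M)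
  = poly_arg H c X (2 * M) + psum (fun s => vertex_defect X Y (2 * M) (2 * s + b)) M.
Proof.
  intros hM hb hc hX hY. rewrite <- (poly_arg_replace_class c X Y b M M) by auto.
  apply poly_arg_ext; [lia|]. intros j hj.
  destruct (Bool.eqb (Nat.even j) (Nat.even b)) eqn:E.
  - apply Bool.eqb_prop in E.
    assert (exists s0, j = (2 * s0 + b)%nat /\ (s0 < M)%nat) as [s0 [-> hs0]].
    { destruct (Nat.Even_or_Odd j) as [[u ->]|[u ->]]; exists u;
        [rewrite Nat.even_even in E | rewrite Nat.even_odd in E];
        destruct b as [|[|]]; simpl in E; try discriminate; split; lia. }
    symmetry. apply replace_class_new. auto.
  - symmetry. apply replace_class_old. intros s0 _. apply parity_neq_class; auto.
    intro e. rewrite e, Bool.eqb_reflx in E. discriminate.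
Qed.

End VertexChange.

Section Words.
Open Scope nat_scope.
Variable n : nat.

Lemma Hn_eq_refl u : Hn_eq n u u.
Proof. apply rst_refl. Qed.

Lemma Hn_eq_sym u v : Hn_eq n u v -> Hn_eq n v u.
Proof. apply rst_sym. Qed.

Lemma Hn_eq_trans u v w : Hn_eq n u v -> Hn_eq n v w -> Hn_eq n u w.
Proof. apply rst_trans. Qed.

Lemma Hn_eq_app a b u v : Hn_eq n u v -> Hn_eq n (a ++ u ++ b) (a ++ v ++ b).
Proof.
  induction 1 as [u v [u' v' i hi | u' v'] | | |].
  - replace (a ++ (u' ++ i :: i :: v') ++ b) with ((a ++ u') ++ i :: i :: (v' ++ b))
      by (rewrite <- !app_assoc; reflexivity).
    replace (a ++ (u' ++ v') ++ b) with ((a ++ u') ++ (v' ++ b))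
      by (rewrite <- !app_assoc; reflexivity).
    apply rst_step, Hn_sq; auto.
  - replace (a ++ (u' ++ rev (seq 1 n) ++ v') ++ b) with ((a ++ u') ++ rev (seq 1 n) ++ (v' ++ b))
      by (rewrite <- !app_assoc; reflexivity).
    replace (a ++ (u' ++ v') ++ b) with ((a ++ u') ++ (v' ++ b))
      by (rewrite <- !app_assoc; reflexivity).
    apply rst_step, Hn_rel.
  - apply rst_refl.
  - apply rst_sym; auto.
  - eapply rst_trans; eauto.
Qed.

Lemma Hn_eq_app_l a u v : Hn_eq n u v -> Hn_eq n (a ++ u) (a ++ v).
Proof. intros h. pose proof (Hn_eq_app a [] u v h) as h'. rewrite !app_nil_r in h'. auto. Qed.

Lemma Hn_eq_app_r b u v : Hn_eq n u v -> Hn_eq n (u ++ b) (v ++ b).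
Proof. apply (Hn_eq_app [] b). Qed.

Lemma Hn_eq_square u v i : 1 <= i <= n -> Hn_eq n (u ++ i :: i :: v) (u ++ v).
Proof. intros; apply rst_step, Hn_sq; auto. Qed.

Lemma Hn_eq_relator u v : Hn_eq n (u ++ rev (seq 1 n) ++ v) (u ++ v).
Proof. apply rst_step, Hn_rel. Qed.

Lemma valid_word_rev w : valid_word n w -> valid_word n (rev w).
Proof. unfold valid_word. rewrite !Forall_forall. intros h x hx. apply h, in_rev; auto. Qed.

Lemma valid_word_vword k : k <= n -> valid_word n (vword k).
Proof.
  intros hk. apply valid_word_rev. unfold valid_word. rewrite Forall_forall.
  intros x hx. apply in_seq in hx. lia.
Qed.

Lemma Hn_eq_rev_app_cancel w : valid_word n w -> Hn_eq n (rev w ++ w) [].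
Proof.
  induction w as [|a w IH]; intros hv; [apply Hn_eq_refl|].
  inversion hv; subst. simpl. rewrite <- app_assoc. simpl.
  eapply Hn_eq_trans; [apply Hn_eq_square; auto | apply IH; auto].
Qed.

Lemma Hn_eq_app_rev_cancel w : valid_word n w -> Hn_eq n (w ++ rev w) [].
Proof.
  intros h. pose proof (Hn_eq_rev_app_cancel (rev w) (valid_word_rev w h)) as h'.
  rewrite rev_involutive in h'. auto.
Qed.

Lemma Hn_eq_seq : Hn_eq n (seq 1 n) [].
Proof.
  pose proof (Hn_eq_relator (rev (rev (seq 1 n))) []) as h. rewrite !app_nil_r in h.
  rewrite <- (rev_involutive (seq 1 n)) at 1.
  eapply Hn_eq_trans; [apply Hn_eq_sym, h|].
  apply Hn_eq_rev_app_cancel, valid_word_vword. lia.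
Qed.

Lemma Hn_eq_rev u v : Hn_eq n u v -> Hn_eq n (rev u) (rev v).
Proof.
  induction 1 as [u v [u' v' i hi | u' v'] | | |].
  - rewrite !rev_app_distr. simpl. rewrite <- !app_assoc. simpl. apply Hn_eq_square; auto.
  - rewrite !rev_app_distr, rev_involutive, <- app_assoc.
    pose proof (Hn_eq_app (rev v') (rev u') (seq 1 n) [] Hn_eq_seq) as h. simpl in h. auto.
  - apply Hn_eq_refl.
  - apply Hn_eq_sym; auto.
  - eapply Hn_eq_trans; eauto.
Qed.

End Words.

Section StepWords.
Open Scope nat_scope.
Variable n : nat.

Definition w0 (i : nat) : word := if Nat.even i then vword i else vword i ++ [n].

Definition tword (l : nat) : word := rev (vword (l - 1)) ++ [l] ++ vword (l - 1) ++ [n].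
Definition tindex (i : nat) : nat := if i <=? n - 2 then i + 1 else i + 2 - n.

Definition step_word (i : nat) : word := rev (wword n i) ++ wword n (cyc_next (2 * (n - 1)) i).

Lemma vword_S k : vword (S k) = S k :: vword k.
Proof. unfold vword. rewrite seq_S, rev_unit. reflexivity. Qed.

Lemma vword_pred k : 1 <= k -> vword k = k :: vword (k - 1).
Proof. intros. replace k with (S (k - 1)) at 1 by lia. rewrite vword_S. f_equal. lia. Qed.

Lemma rev_tword l : rev (tword l) = n :: rev (vword (l - 1)) ++ l :: vword (l - 1).
Proof. unfold tword. rewrite !rev_app_distr, rev_involutive. simpl. rewrite <- !app_assoc. reflexivity. Qed.

Lemma wword_first j : j < n - 1 -> wword n j = w0 j.
Proof. intros h. unfold wword, w0. apply Nat.ltb_lt in h. rewrite h. reflexivity. Qed.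

Lemma wword_second j : n - 1 <= j -> wword n j = [n] ++ w0 (j - (n - 1)) ++ [n].
Proof.
  intros h. unfold wword, w0. destruct (j <? n - 1) eqn:E; [apply Nat.ltb_lt in E; lia|].
  reflexivity.
Qed.

(* The class of [2 s + b] is paired with that of [2 (s + N - 1) + b]: they carry the
   same generator in [step_word_tword]. *)
Lemma tindex_pairing N s b : n = 2 * N -> 3 <= N -> s < n - 1 -> b <= 1 ->
  tindex (cyc_prev (2 * (n - 1)) (2 * s + b)) = tindex (2 * ((s + (N - 1)) mod (n - 1)) + b).
Proof.
  intros HN hN hs hb. unfold tindex, cyc_prev. rewrite HN in *.
  destruct (Nat.lt_ge_cases (s + (N - 1)) (2 * N - 1)).
  - rewrite Nat.mod_small by lia.
    destruct (Nat.eq_dec (2 * s + b) 0), (Nat.leb_spec (2 * (2 * N - 1) - 1) (2 * N - 2)),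
      (Nat.leb_spec (2 * s + b - 1) (2 * N - 2)), (Nat.leb_spec (2 * (s + (N - 1)) + b) (2 * N - 2));
      lia.
  - replace ((s + (N - 1)) mod (2 * N - 1)) with (s + (N - 1) - (2 * N - 1))
      by (apply (Nat.mod_unique _ _ 1); lia).
    destruct (Nat.eq_dec (2 * s + b) 0), (Nat.leb_spec (2 * (2 * N - 1) - 1) (2 * N - 2)),
      (Nat.leb_spec (2 * s + b - 1) (2 * N - 2)),
      (Nat.leb_spec (2 * (s + (N - 1) - (2 * N - 1)) + b) (2 * N - 2)); lia.
Qed.

Hypothesis Hn : 4 <= n.
Hypothesis Hev : Nat.Even n.

Lemma even_n_minus_2 : Nat.even (n - 2) = true.
Proof. destruct Hev as [N ->]. replace (2 * N - 2) with (2 * (N - 1)) by lia. apply Nat.even_even. Qed.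

Lemma n_between : 1 <= n <= n.
Proof. lia. Qed.

Lemma vword_n1_eq : Hn_eq n (vword (n - 1)) [n].
Proof.
  eapply Hn_eq_trans; [apply Hn_eq_sym, (Hn_eq_square n [] (vword (n - 1)) n n_between)|].
  rewrite app_nil_l.
  replace (n :: n :: vword (n - 1)) with ([n] ++ rev (seq 1 n) ++ [])
    by (rewrite app_nil_r; change (rev (seq 1 n)) with (vword n); rewrite (vword_pred n); auto; lia).
  apply Hn_eq_relator.
Qed.

Lemma vword_n1_cancel : Hn_eq n (vword (n - 1) ++ [n]) [].
Proof.
  eapply Hn_eq_trans; [apply Hn_eq_app_r, vword_n1_eq|].
  apply (Hn_eq_square n [] [] n n_between).
Qed.

Lemma step_word_first i : i <= n - 3 ->
  step_word i = rev (w0 i) ++ w0 (S i) /\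
  step_word i = (if Nat.even i then tword (i + 1) else rev (tword (i + 1))).
Proof.
  intros hi. unfold step_word, cyc_next. destruct (Nat.eq_dec i (2 * (n - 1) - 1)); [lia|].
  rewrite !wword_first by lia. split; auto.
  unfold w0. rewrite Nat.even_succ, <- Nat.negb_even.
  replace (i + 1 - 1) with i by lia. replace (i + 1) with (S i) by lia. rewrite vword_S.
  destruct (Nat.even i); simpl.
  - unfold tword. replace (S i - 1) with i by lia. reflexivity.
  - rewrite rev_tword. replace (S i - 1) with i by lia. rewrite rev_app_distr. reflexivity.
Qed.

Lemma step_word_middle : Hn_eq n (step_word (n - 2)) (tword (n - 1)).
Proof.
  unfold step_word, cyc_next. destruct (Nat.eq_dec (n - 2) (2 * (n - 1) - 1)); [lia|].
  rewrite wword_first, wword_second by lia. replace (S (n - 2) - (n - 1)) with 0 by lia.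
  unfold w0. rewrite even_n_minus_2. simpl. unfold tword. replace (n - 1 - 1) with (n - 2) by lia.
  apply Hn_eq_app_l.
  eapply Hn_eq_trans; [apply (Hn_eq_square n [] [] n n_between)|]. simpl.
  apply Hn_eq_sym. replace (n - 1 :: vword (n - 2) ++ [n]) with (vword (n - 1) ++ [n]).
  - apply vword_n1_cancel.
  - rewrite (vword_pred (n - 1)) by lia. replace (n - 1 - 1) with (n - 2) by lia. reflexivity.
Qed.

Lemma step_word_last : Hn_eq n (step_word (2 * n - 3)) (rev (tword (n - 1))).
Proof.
  unfold step_word, cyc_next. destruct (Nat.eq_dec (2 * n - 3) (2 * (n - 1) - 1)); [|lia].
  rewrite wword_second, wword_first by lia. replace (2 * n - 3 - (n - 1)) with (n - 2) by lia.
  change (w0 0) with (@nil nat). rewrite app_nil_r.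
  unfold w0. rewrite even_n_minus_2, rev_tword. replace (n - 1 - 1) with (n - 2) by lia.
  replace (rev ([n] ++ vword (n - 2) ++ [n])) with ([n] ++ rev (vword (n - 2)) ++ [n])
    by (rewrite !rev_app_distr; reflexivity).
  change (n :: rev (vword (n - 2)) ++ n - 1 :: vword (n - 2))
    with ([n] ++ rev (vword (n - 2)) ++ (n - 1 :: vword (n - 2))).
  rewrite !app_assoc. apply Hn_eq_app_l.
  replace (n - 1 :: vword (n - 2)) with (vword (n - 1)).
  - apply Hn_eq_sym, vword_n1_eq.
  - rewrite (vword_pred (n - 1)) by lia. replace (n - 1 - 1) with (n - 2) by lia. reflexivity.
Qed.

(* In the second half the conjugation by [r_n] reverses the parity of the index. *)
Lemma step_word_second i : n - 1 <= i < 2 * n - 3 ->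
  Hn_eq n (step_word i)
    (if Nat.even i then tword (i + 2 - n) else rev (tword (i + 2 - n))).
Proof.
  intros hi. set (j := i - (n - 1)).
  destruct (step_word_first j ltac:(lia)) as [e1 e2].
  assert (Epar : Nat.even i = negb (Nat.even j)).
  { destruct Hev as [N HN]. replace i with (S (j + 2 * (N - 1))) by lia.
    rewrite Nat.even_succ, <- Nat.negb_even, Nat.even_add_mul_2. reflexivity. }
  replace (i + 2 - n) with (j + 1) by lia.
  assert (E : step_word i = [n] ++ rev (w0 j) ++ [n] ++ [n] ++ w0 (S j) ++ [n]).
  { unfold step_word, cyc_next. destruct (Nat.eq_dec i (2 * (n - 1) - 1)); [lia|].
    rewrite !wword_second by lia. replace (S i - (n - 1)) with (S j) by lia.
    rewrite !rev_app_distr. simpl. rewrite <- !app_assoc. reflexivity. }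
  rewrite E.
  eapply Hn_eq_trans with ([n] ++ step_word j ++ [n]).
  { rewrite e1, <- !app_assoc. apply Hn_eq_app_l. simpl. apply (Hn_eq_square n _ _ n n_between). }
  rewrite e2, Epar. destruct (Nat.even j); simpl; rewrite rev_tword; unfold tword;
    set (v := vword (j + 1 - 1)); set (l := j + 1).
  - match goal with |- Hn_eq _ ?L _ =>
      replace L with ((n :: rev v ++ l :: v) ++ n :: n :: [])
        by (repeat progress (simpl; rewrite <- ?app_assoc); reflexivity) end.
    eapply Hn_eq_trans; [apply (Hn_eq_square n _ _ n n_between)|]. rewrite app_nil_r. apply Hn_eq_refl.
  - match goal with |- Hn_eq _ ?L _ =>
      replace L with ([] ++ n :: n :: (rev v ++ [l] ++ v ++ [n]))
        by (repeat progress (simpl; rewrite <- ?app_assoc); reflexivity) end.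
    apply (Hn_eq_square n [] _ n n_between).
Qed.

Lemma step_word_tword i : i < 2 * (n - 1) ->
  Hn_eq n (step_word i) (if Nat.even i then tword (tindex i) else rev (tword (tindex i))).
Proof.
  intros hi. unfold tindex.
  destruct (Nat.leb_spec i (n - 2)).
  - destruct (Nat.eq_dec i (n - 2)) as [->|].
    + rewrite even_n_minus_2. replace (n - 2 + 1) with (n - 1) by lia. apply step_word_middle.
    + rewrite (proj2 (step_word_first i ltac:(lia))). apply Hn_eq_refl.
  - destruct (Nat.eq_dec i (2 * n - 3)) as [->|].
    + replace (Nat.even (2 * n - 3)) with false
        by (replace (2 * n - 3) with (2 * (n - 2) + 1) by lia; rewrite Nat.even_odd; auto).
      replace (2 * n - 3 + 2 - n) with (n - 1) by lia. apply step_word_last.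
    + apply step_word_second. lia.
Qed.

Lemma step_word_rev_eq k k' : k < 2 * (n - 1) -> k' < 2 * (n - 1) ->
  Nat.even k' = negb (Nat.even k) -> tindex k = tindex k' ->
  Hn_eq n (rev (step_word k)) (step_word k').
Proof.
  intros hk hk' par hl.
  eapply Hn_eq_trans; [apply Hn_eq_rev, (step_word_tword k hk)|].
  eapply Hn_eq_trans; [|apply Hn_eq_sym, (step_word_tword k' hk')].
  rewrite par, hl. destruct (Nat.even k); simpl; rewrite ?rev_involutive; apply Hn_eq_refl.
Qed.

End StepWords.

Lemma mat_app_scale l A x : mat_app (mat_scale l A) x = vscale l (mat_app A x).
Proof. destruct A as [[[a b] c] d], x. unfold mat_app, mat_scale, vscale. simpl. f_equal; ring. Qed.

Lemma mat_app_mul A B x : mat_app (mat_mul A B) x = mat_app A (mat_app B x).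
Proof.
  destruct A as [[[a b] c] d], B as [[[a' b'] c'] d'], x. unfold mat_app, mat_mul. simpl.
  f_equal; ring.
Qed.

Lemma vscale_vscale a b x : vscale a (vscale b x) = vscale (a * b)%C x.
Proof. destruct x. unfold vscale. simpl. f_equal; ring. Qed.

Lemma proj_eq_mat_app A B x : proj_eq A B ->
  exists l, l <> RtoC 0 /\ mat_app A x = vscale l (mat_app B x).
Proof. intros [l [nl ->]]. exists l. split; auto. apply mat_app_scale. Qed.

Lemma proj_eq_sym A B : proj_eq A B -> proj_eq B A.
Proof.
  intros [l [nl ->]]. exists (/ l)%C. split.
  - intro h. apply nl. rewrite <- (Cmult_1_l l), <- (Cinv_r l), h by auto. ring.
  - destruct B as [[[a b] c] d]. unfold mat_scale. f_equal; [f_equal; [f_equal|]|]; field; auto.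
Qed.

Lemma herm_nondegenerate H x : indefinite H ->
  herm H x (RtoC 1, RtoC 0) = RtoC 0 -> herm H x (RtoC 0, RtoC 1) = RtoC 0 ->
  x = (RtoC 0, RtoC 0).
Proof.
  intros s h1 h2. destruct x as [X Y], H as [a b d]. unfold herm in h1, h2.
  cbn [fst snd ha hb Defs.hd] in h1, h2.
  assert (Cconj_R : forall r, Cconj (RtoC r) = RtoC r) by (intros; cunfold; f_equal; ring).
  assert (k1 : (RtoC a * X + b * Y)%C = RtoC 0) by (rewrite <- h1, !Cconj_R; ring).
  assert (k2 : (Cconj b * X + RtoC d * Y)%C = RtoC 0) by (rewrite <- h2, !Cconj_R; ring).
  assert (Dn : (RtoC a * RtoC d - b * Cconj b)%C <> RtoC 0).
  { unfold indefinite, Cnorm2 in s. simpl in s. destruct b as [b1 b2].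
    unfold Re, Im in s. cunfold. intro e0. injection e0. intros. lra. }
  assert (ex : (X * (RtoC a * RtoC d - b * Cconj b))%C = RtoC 0).
  { transitivity (RtoC d * (RtoC a * X + b * Y) - b * (Cconj b * X + RtoC d * Y))%C; [ring|].
    rewrite k1, k2. ring. }
  assert (ey : (Y * (RtoC a * RtoC d - b * Cconj b))%C = RtoC 0).
  { transitivity (RtoC a * (Cconj b * X + RtoC d * Y) - Cconj b * (RtoC a * X + b * Y))%C; [ring|].
    rewrite k1, k2. ring. }
  destruct (Cmult_integral _ _ ex) as [->|]; [|contradiction].
  destruct (Cmult_integral _ _ ey) as [->|]; [reflexivity|contradiction].
Qed.

Lemma unitary_in_closed_ball H A x : indefinite H -> is_unitary H A ->
  in_closed_ball H x -> in_closed_ball H (mat_app A x).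
Proof.
  intros s U [nx hx]. split.
  - intro e. apply nx, (herm_nondegenerate H); auto; rewrite <- U, e; unfold herm; simpl; ring.
  - rewrite U. auto.
Qed.

Definition Gn_word n w := valid_word n w /\ even_word w.

Lemma Gn_word_app n u v : Gn_word n u -> Gn_word n v -> Gn_word n (u ++ v).
Proof.
  intros [vu [k1 e1]] [vv [k2 e2]]. split; [apply Forall_app; auto|].
  exists (k1 + k2)%nat. rewrite length_app. lia.
Qed.

Lemma Gn_word_rev n u : Gn_word n u -> Gn_word n (rev u).
Proof.
  intros [vu eu]. split; [apply valid_word_rev; auto|]. unfold even_word. rewrite length_rev. auto.
Qed.

Section Representation.
Variables (n : nat) (H : hform) (rho : word -> mat).
Hypothesis Hind : indefinite H.
Hypothesis Hrho : Gn_rep n H rho.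

Lemma rep_mat_app_Hn_eq z u v x : Gn_word n z -> Gn_word n u -> Gn_word n v ->
  Hn_eq n (z ++ u) v ->
  exists l, l <> RtoC 0 /\ mat_app (rho z) (mat_app (rho u) x) = vscale l (mat_app (rho v) x).
Proof.
  destruct Hrho as [_ [_ [Hmul Heq]]].
  intros hz hu hv h.
  destruct (proj_eq_mat_app _ _ x (proj_eq_sym _ _ (Hmul z u (proj1 hz) (proj2 hz)
              (proj1 hu) (proj2 hu)))) as [l1 [n1 e1]].
  rewrite mat_app_mul in e1. rewrite e1.
  destruct (Gn_word_app n z u hz hu) as [vzu ezu].
  destruct (proj_eq_mat_app _ _ x (Heq _ _ vzu ezu (proj1 hv) (proj2 hv) h)) as [l2 [n2 ->]].
  rewrite vscale_vscale. exists (l1 * l2)%C. split; auto. apply Cmult_neq_0; auto.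
Qed.

(* Both sides are moved by [rho (b a^-1)] to the same triangle up to scalars. *)
Lemma tri_arg_rep_invariant a a' b b' x y x' :
  Gn_word n a -> Gn_word n a' -> Gn_word n b -> Gn_word n b' ->
  Hn_eq n (rev a ++ a') (rev b ++ b') ->
  tri_arg H (mat_app (rho a) x) (mat_app (rho a') y) (mat_app (rho a) x')
  = tri_arg H (mat_app (rho b) x) (mat_app (rho b') y) (mat_app (rho b) x').
Proof.
  intros va va' vb vb' h.
  set (z := b ++ rev a).
  assert (vz : Gn_word n z) by (apply Gn_word_app, Gn_word_rev; auto).
  assert (h1 : Hn_eq n (z ++ a) b).
  { unfold z. rewrite <- app_assoc.
    pose proof (Hn_eq_app_l n b _ _ (Hn_eq_rev_app_cancel n a (proj1 va))) as h'.
    rewrite app_nil_r in h'. auto. }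
  assert (h2 : Hn_eq n (z ++ a') b').
  { unfold z. rewrite <- app_assoc. eapply Hn_eq_trans; [apply Hn_eq_app_l, h|].
    rewrite app_assoc. apply (Hn_eq_app_r n b' (b ++ rev b) []), Hn_eq_app_rev_cancel, vb. }
  rewrite <- (tri_arg_unitary H (rho z)) by (apply (proj1 Hrho); apply vz).
  destruct (rep_mat_app_Hn_eq z a b x vz va vb h1) as [l1 [n1 ->]].
  destruct (rep_mat_app_Hn_eq z a' b' y vz va' vb' h2) as [l2 [n2 ->]].
  destruct (rep_mat_app_Hn_eq z a b x' vz va vb h1) as [l3 [n3 ->]].
  apply tri_arg_vscale; auto.
Qed.

End Representation.

Section AreaInvariance.
Variables (n N : nat) (H : hform) (rho : word -> mat).
Hypothesis HN : n = (2 * N)%nat.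
Hypothesis HN3 : (3 <= N)%nat.
Hypothesis Hind : indefinite H.
Hypothesis Hrho : Gn_rep n H rho.

Definition vertex (p q : vec) (j : nat) : vec :=
  mat_app (rho (wword n j)) (if Nat.even j then p else q).

Lemma Gn_word_w0 i : (i <= n - 2)%nat -> Gn_word n (w0 n i).
Proof.
  intros hi. unfold w0, Gn_word, even_word, vword. destruct (Nat.even i) eqn:E; split.
  - apply valid_word_vword. lia.
  - rewrite length_rev, length_seq. apply Nat.even_spec; auto.
  - apply Forall_app. split; [apply valid_word_vword; lia | apply Forall_cons; [lia | apply Forall_nil]].
  - rewrite length_app, length_rev, length_seq. apply Nat.even_spec.
    rewrite Nat.add_1_r, Nat.even_succ, <- Nat.negb_even, E. reflexivity.
Qed.

Lemma Gn_word_wword j : (j < 2 * (n - 1))%nat -> Gn_word n (wword n j).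
Proof.
  intros hj. destruct (Nat.lt_ge_cases j (n - 1)).
  - rewrite wword_first by auto. apply Gn_word_w0. lia.
  - rewrite wword_second by auto.
    destruct (Gn_word_w0 (j - (n - 1))) as [v [k e]]; [lia|].
    assert (vn : valid_word n [n]) by (apply Forall_cons; [lia | apply Forall_nil]).
    split.
    + apply Forall_app. split; [|apply Forall_app]; auto.
    + exists (S k). rewrite !length_app, e. simpl. lia.
Qed.

Lemma vertex_in_closed_ball p q j : in_closed_ball H p -> in_closed_ball H q ->
  (j < 2 * (n - 1))%nat -> in_closed_ball H (vertex p q j).
Proof.
  intros hp hq hj. unfold vertex. apply unitary_in_closed_ball; auto.
  - destruct (Gn_word_wword j hj). apply (proj1 Hrho); auto.
  - destruct (Nat.even j); auto.
Qed.

Lemma vertex_pairing p q p' q' s b : (s < n - 1)%nat -> (b <= 1)%nat ->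
  let k := (2 * s + b)%nat in
  let k' := (2 * ((s + (N - 1)) mod (n - 1)) + b)%nat in
  tri_arg H (vertex p q k) (vertex p q (cyc_prev (2 * (n - 1)) k)) (vertex p' q' k)
  = tri_arg H (vertex p q k') (vertex p q (cyc_next (2 * (n - 1)) k')) (vertex p' q' k').
Proof.
  intros hs hb k k'.
  assert (hev : Nat.Even (2 * (n - 1))) by (exists (n - 1)%nat; reflexivity).
  assert (ht : ((s + (N - 1)) mod (n - 1) < n - 1)%nat) by (apply Nat.mod_upper_bound; lia).
  assert (hk : (k < 2 * (n - 1))%nat) by (unfold k; lia).
  assert (hk' : (k' < 2 * (n - 1))%nat) by (unfold k'; lia).
  assert (par : Nat.even k' = Nat.even k).
  { unfold k, k'. rewrite !(Nat.add_comm (2 * _)), !Nat.even_add_mul_2. reflexivity. }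
  assert (par' : Nat.even (cyc_next (2 * (n - 1)) k') = negb (Nat.even k)).
  { rewrite even_cyc_next, par; auto. }
  unfold vertex. rewrite par, par', even_cyc_prev by auto.
  apply (tri_arg_rep_invariant n H rho); auto using Gn_word_wword, cyc_prev_lt, cyc_next_lt.
  change (rev (wword n k') ++ wword n (cyc_next (2 * (n - 1)) k')) with (step_word n k').
  replace (rev (wword n k) ++ wword n (cyc_prev (2 * (n - 1)) k))
    with (rev (step_word n (cyc_prev (2 * (n - 1)) k)))
    by (unfold step_word; rewrite cyc_next_prev, rev_app_distr, rev_involutive; auto).
  apply step_word_rev_eq.
  - lia.
  - exists N. auto.
  - apply cyc_prev_lt. auto.
  - auto.
  - rewrite even_cyc_prev, Bool.negb_involutive; auto.
  - apply tindex_pairing; auto.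
Qed.

Lemma vertex_defect_sum p q p' q' b : (b <= 1)%nat ->
  psum (fun s => vertex_defect H (vertex p q) (vertex p' q') (2 * (n - 1)) (2 * s + b)) (n - 1) = 0.
Proof.
  intros hb. unfold vertex_defect. rewrite psum_minus.
  set (next_term := fun t => tri_arg H (vertex p q (2 * t + b))
                      (vertex p q (cyc_next (2 * (n - 1)) (2 * t + b))) (vertex p' q' (2 * t + b))).
  rewrite (psum_ext _ (fun s => next_term ((s + (N - 1)) mod (n - 1))%nat)).
  - rewrite psum_rotate by lia. unfold next_term. ring.
  - intros s hs. apply vertex_pairing; auto.
Qed.

Lemma poly_arg_vertex_replace c p q p' q' b : (b <= 1)%nat -> in_closed_ball H c ->
  in_closed_ball H p -> in_closed_ball H q -> in_closed_ball H p' -> in_closed_ball H q' ->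
  poly_arg H c (fun j => if Bool.eqb (Nat.even j) (Nat.even b) then vertex p' q' j
                         else vertex p q j) (2 * (n - 1))
  = poly_arg H c (vertex p q) (2 * (n - 1)).
Proof.
  intros hb hc hp hq hp' hq'.
  rewrite poly_arg_replace_parity, vertex_defect_sum by (auto using vertex_in_closed_ball; lia).
  ring.
Qed.

End AreaInvariance.

Theorem lemma5p6 (n : nat) (Hn6 : (6 <= n)%nat) (Hev : Nat.Even n)
  (H : hform) (Hsig : signature_pm H) (rho : word -> mat) (Hrho : Gn_rep n H rho) :
  forall c p q c' p' q' : vec,
    in_closed_ball H c -> in_closed_ball H p -> in_closed_ball H q ->
    in_closed_ball H c' -> in_closed_ball H p' -> in_closed_ball H q' ->
    Area_n H n rho c p q = Area_n H n rho c' p' q'.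
Proof.
  intros c p q c' p' q' hc hp hq hc' hp' hq'.
  destruct Hev as [N HN]. assert (HN3 : (3 <= N)%nat) by lia.
  pose proof (signature_pm_indefinite H Hsig) as Hind.
  assert (area : forall c0 p0 q0,
    Area_n H n rho c0 p0 q0 = 2 * poly_arg H c0 (vertex n rho p0 q0) (2 * (n - 1))).
  { intros. unfold Area_n, Area_pts. replace (2 * n - 2)%nat with (2 * (n - 1))%nat by lia.
    apply area_poly_poly_arg. lia. }
  assert (ball : forall p0 q0 j, in_closed_ball H p0 -> in_closed_ball H q0 ->
    (j < 2 * (n - 1))%nat -> in_closed_ball H (vertex n rho p0 q0 j))
    by (intros; apply (vertex_in_closed_ball n N); auto).
  rewrite !area, (poly_arg_center_indep H Hind c c') by (auto; lia).
  f_equal.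
  pose proof (poly_arg_vertex_replace n N H rho HN HN3 Hind Hrho c') as replace.
  transitivity (poly_arg H c' (vertex n rho p' q) (2 * (n - 1))).
  - rewrite <- (replace p q p' q 0%nat) by auto.
    apply poly_arg_ext; [lia|]. intros j _. unfold vertex. destruct (Nat.even j); reflexivity.
  - rewrite <- (replace p' q p' q' 1%nat) by auto.
    apply poly_arg_ext; [lia|]. intros j _. unfold vertex. destruct (Nat.even j); reflexivity.
Qed.
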